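(* Let $U$ be a supertropical monoid and $E$ a TE-relation on $U$. Then the set $U/E$ of $E$-equivalence classes carries a unique structure of a supertropical monoid such that the map $\pi_E:U\to U/E$, $x\mapsto[x]_E$, is a transmission.
   Context: A supertropical monoid is a monoid $(U,\cdot)$ with absorbing element $0$ and a distinguished central idempotent $e$ with $ex=0\Rightarrow x=0$, together with a total ordering on $M:=eU$, compatible with multiplication and with $0$ least, making $M$ a bipotent semiring (addition $=\max$). A transmission $\alpha:U\to V$ is a map with $\alpha(0)=0$, $\alpha(1)=1$, $\alpha(xy)=\alpha(x)\alpha(y)$, $\alpha(e_U)=e_V$, and $x\le y\Rightarrow\alpha(x)\le\alpha(y)$ for $x,y\in eU$. An equivalence relation $E$ on $U$ is a TE-relation if: (TE1) it is multiplicative: $x\sim_E y\Rightarrow xz\sim_E yz$ and $zx\sim_E zy$; (TE2) its restriction to $M$ is order compatible: if $x_1,x_2,x_3,x_4\in M$ with $x_1\le x_2$, $x_3\le x_4$, $x_1\sim_E x_4$, $x_2\sim_E x_3$, then $x_1\sim_E x_2$; (TE3) if $x\in U$ and $ex\sim_E 0$, then $x\sim_E 0$. *)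

Set Implicit Arguments.

(* Data of a supertropical monoid on a carrier T:
   multiplication, 1, 0, the ghost idempotent e, and an order relation
   (only meaningful on the ghost ideal M = eT). *)
Record stm_ops (T : Type) := STMOps {
  smul : T -> T -> T;
  sone : T;
  szero : T;
  se : T;
  sle : T -> T -> Prop
}.

Definition inM (T : Type) (S : stm_ops T) (x : T) : Prop :=
  exists y, x = smul S (se S) y.

Definition is_stm (T : Type) (S : stm_ops T) : Prop :=
  let mul := smul S in let one := sone S in let zero := szero S in
  let e := se S in let le := sle S in
  (forall x y z, mul (mul x y) z = mul x (mul y z)) /\
  (forall x, mul one x = x) /\ (forall x, mul x one = x) /\
  (forall x, mul zero x = zero) /\ (forall x, mul x zero = zero) /\
  (forall x, mul e x = mul x e) /\ mul e e = e /\
  (forall x, mul e x = zero -> x = zero) /\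
  (forall x, inM S x -> le x x) /\
  (forall x y, inM S x -> inM S y -> le x y -> le y x -> x = y) /\
  (forall x y z, inM S x -> inM S y -> inM S z -> le x y -> le y z -> le x z) /\
  (forall x y, inM S x -> inM S y -> le x y \/ le y x) /\
  (* compatible with multiplication (so max distributes: M is a bipotent semiring) *)
  (forall x y z, inM S x -> inM S y -> inM S z -> le x y ->
     le (mul x z) (mul y z) /\ le (mul z x) (mul z y)) /\
  (forall x, inM S x -> le zero x).

Definition transmission (U V : Type) (SU : stm_ops U) (SV : stm_ops V)
  (alpha : U -> V) : Prop :=
  alpha (szero SU) = szero SV /\
  alpha (sone SU) = sone SV /\
  (forall x y, alpha (smul SU x y) = smul SV (alpha x) (alpha y)) /\
  alpha (se SU) = se SV /\
  (forall x y, inM SU x -> inM SU y -> sle SU x y -> sle SV (alpha x) (alpha y)).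

Definition TE_relation (U : Type) (S : stm_ops U) (E : U -> U -> Prop) : Prop :=
  (forall x, E x x) /\ (forall x y, E x y -> E y x) /\
  (forall x y z, E x y -> E y z -> E x z) /\
  (forall x y z, E x y -> E (smul S x z) (smul S y z) /\ E (smul S z x) (smul S z y)) /\
  (forall x1 x2 x3 x4, inM S x1 -> inM S x2 -> inM S x3 -> inM S x4 ->
     sle S x1 x2 -> sle S x3 x4 -> E x1 x4 -> E x2 x3 -> E x1 x2) /\
  (forall x, E (smul S (se S) x) (szero S) -> E x (szero S)).

Definition quot (U : Type) (E : U -> U -> Prop) : Type :=
  { P : U -> Prop | exists x, P = E x }.

Definition qproj (U : Type) (E : U -> U -> Prop) (x : U) : quot E :=
  exist (fun P => exists x0, P = E x0) (E x) (ex_intro _ x eq_refl).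

Definition same_stm (T : Type) (S1 S2 : stm_ops T) : Prop :=
  (forall x y, smul S1 x y = smul S2 x y) /\
  sone S1 = sone S2 /\ szero S1 = szero S2 /\ se S1 = se S2 /\
  (forall x y, inM S1 x -> inM S1 y -> (sle S1 x y <-> sle S2 x y)).

(* The structure on U/E is induced through pi_E: TE1 makes the multiplication
   well defined and TE3 yields e[x] = 0 => [x] = 0.  On classes of ghost
   elements put [a] <= [b] iff a <= b or a ~ b; TE2 together with the totality
   of the order on M makes this independent of the representatives, and the
   order axioms are then inherited from M.  Uniqueness holds for any surjective
   transmission: it forces the multiplication and the constants, and totality
   on M together with antisymmetry in the target forces the order. *)

From Stdlib Require Import RelationClasses ClassicalEpsilon FunctionalExtensionality
  PropExtensionality ProofIrrelevance.
Set Implicit Arguments.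

Section StmAxioms.

Variables (T : Type) (S : stm_ops T).
Hypothesis HS : is_stm S.

Local Notation "x * y" := (smul S x y).
Local Notation e := (se S).
Local Notation "x <= y" := (sle S x y).

Lemma stm_mulA x y z : x * y * z = x * (y * z).
Proof. unfold is_stm in HS; intuition. Qed.

Lemma stm_mul1x x : sone S * x = x.
Proof. unfold is_stm in HS; intuition. Qed.

Lemma stm_mulx1 x : x * sone S = x.
Proof. unfold is_stm in HS; intuition. Qed.

Lemma stm_mul0x x : szero S * x = szero S.
Proof. unfold is_stm in HS; intuition. Qed.

Lemma stm_mulx0 x : x * szero S = szero S.
Proof. unfold is_stm in HS; intuition. Qed.

Lemma stm_mulC_e x : e * x = x * e.
Proof. unfold is_stm in HS; intuition. Qed.

Lemma stm_mul_ee : e * e = e.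
Proof. unfold is_stm in HS; intuition. Qed.

Lemma stm_le_refl x : inM S x -> x <= x.
Proof. unfold is_stm in HS; intuition. Qed.

Lemma stm_le_anti x y : inM S x -> inM S y -> x <= y -> y <= x -> x = y.
Proof. unfold is_stm in HS; intuition. Qed.

Lemma stm_le_trans x y z : inM S x -> inM S y -> inM S z -> x <= y -> y <= z -> x <= z.
Proof. unfold is_stm in HS; intuition eauto. Qed.

Lemma stm_le_total x y : inM S x -> inM S y -> x <= y \/ y <= x.
Proof. unfold is_stm in HS; intuition. Qed.

Lemma stm_le_mul x y z : inM S x -> inM S y -> inM S z -> x <= y ->
  x * z <= y * z /\ z * x <= z * y.
Proof.
  intros Hx Hy Hz Hxy.
  destruct HS as (_ & _ & _ & _ & _ & _ & _ & _ & _ & _ & _ & _ & le_mul & _).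
  now apply le_mul.
Qed.

Lemma stm_le0x x : inM S x -> szero S <= x.
Proof. unfold is_stm in HS; intuition. Qed.

Lemma inM_e x : inM S (e * x).
Proof. now exists x. Qed.

Lemma inM_0 : inM S (szero S).
Proof. exists (szero S); now rewrite stm_mulx0. Qed.

Lemma inM_mull x y : inM S x -> inM S (x * y).
Proof. intros [a ->]; exists (a * y); apply stm_mulA. Qed.

Lemma inM_mulr x y : inM S y -> inM S (x * y).
Proof.
  intros [a ->]; exists (x * a).
  now rewrite <- stm_mulA, <- stm_mulC_e, stm_mulA.
Qed.

End StmAxioms.

Lemma transmission_inM (U V : Type) (SU : stm_ops U) (SV : stm_ops V) (alpha : U -> V) a :
  transmission SU SV alpha -> inM SU a -> inM SV (alpha a).
Proof.
  intros (_ & _ & alpha_mul & alpha_e & _) [b ->]; exists (alpha b).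
  now rewrite alpha_mul, alpha_e.
Qed.

Section SurjectiveTransmission.

Variables (U V : Type) (SU : stm_ops U) (alpha : U -> V).
Hypothesis alpha_surj : forall v, exists u, v = alpha u.

Lemma inM_transmission_image (SV : stm_ops V) v : transmission SU SV alpha ->
  inM SV v <-> exists a, inM SU a /\ v = alpha a.
Proof.
  intros Halpha; split.
  - pose proof Halpha as (_ & _ & alpha_mul & alpha_e & _).
    intros [w ->]; destruct (alpha_surj w) as [b ->].
    exists (smul SU (se SU) b); split; [apply inM_e|].
    now rewrite alpha_mul, alpha_e.
  - intros (a & Ha & ->); exact (transmission_inM Halpha Ha).
Qed.

Hypothesis HU : is_stm SU.

Lemma transmission_le_transfer (S1 S2 : stm_ops V) : is_stm S1 -> is_stm S2 ->
  transmission SU S1 alpha -> transmission SU S2 alpha ->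
  forall a b, inM SU a -> inM SU b ->
  sle S1 (alpha a) (alpha b) -> sle S2 (alpha a) (alpha b).
Proof.
  intros HS1 HS2 T1 T2 a b Ha Hb Hab.
  pose proof T1 as (_ & _ & _ & _ & mono1).
  pose proof T2 as (_ & _ & _ & _ & mono2).
  destruct (stm_le_total HU Ha Hb) as [Hab' | Hba]; [now apply mono2|].
  assert (alpha a = alpha b) as ->
    by exact (stm_le_anti HS1 (transmission_inM T1 Ha) (transmission_inM T1 Hb)
                Hab (mono1 b a Hb Ha Hba)).
  exact (stm_le_refl HS2 (transmission_inM T2 Hb)).
Qed.

Lemma surjective_transmission_same_stm (S1 S2 : stm_ops V) : is_stm S1 -> is_stm S2 ->
  transmission SU S1 alpha -> transmission SU S2 alpha -> same_stm S1 S2.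
Proof.
  intros HS1 HS2 T1 T2.
  pose proof T1 as (zero1 & one1 & mul1 & e1 & _).
  pose proof T2 as (zero2 & one2 & mul2 & e2 & _).
  split; [|split; [|split; [|split]]].
  - intros x y; destruct (alpha_surj x) as [a ->], (alpha_surj y) as [b ->].
    now rewrite <- mul1, mul2.
  - now rewrite <- one1, one2.
  - now rewrite <- zero1, zero2.
  - now rewrite <- e1, e2.
  - intros x y Hx Hy.
    apply (inM_transmission_image _ T1) in Hx as (a & Ha & ->).
    apply (inM_transmission_image _ T1) in Hy as (b & Hb & ->).
    split; apply transmission_le_transfer; auto.
Qed.

End SurjectiveTransmission.

Section Quotient.

Variables (U : Type) (E : U -> U -> Prop).

Definition rep (c : quot E) : U :=
  proj1_sig (constructive_indefinite_description _ (proj2_sig c)).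

Lemma qproj_rep c : qproj E (rep c) = c.
Proof.
  unfold rep; destruct (constructive_indefinite_description _ _) as [x Hx].
  apply eq_sig_hprop; [intros; apply proof_irrelevance|]; now simpl.
Qed.

Lemma qproj_surj c : exists x, c = qproj E x.
Proof. exists (rep c); now rewrite qproj_rep. Qed.

Hypothesis E_equiv : Equivalence E.

Lemma qproj_eq x y : qproj E x = qproj E y <-> E x y.
Proof.
  split.
  - intros Hxy; apply (f_equal (@proj1_sig _ _)) in Hxy; simpl in Hxy.
    rewrite Hxy; reflexivity.
  - intros Hxy; apply eq_sig_hprop; [intros; apply proof_irrelevance|]; simpl.
    extensionality z; apply propositional_extensionality.
    split; intros; [symmetry in Hxy|]; etransitivity; eauto.
Qed.

End Quotient.

Section QuotientStm.

Variables (U : Type) (SU : stm_ops U) (E : U -> U -> Prop).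
Hypotheses (HU : is_stm SU) (HE : TE_relation SU E).

Local Notation "x * y" := (smul SU x y).
Local Notation "x <= y" := (sle SU x y).
Local Notation e := (se SU).
Local Notation "[ x ]" := (qproj E x).

#[local] Instance TE_equivalence : Equivalence E.
Proof. destruct HE as (E_refl & E_sym & E_trans & _); split; eauto. Qed.

Lemma TE_mul x y z : E x y -> E (x * z) (y * z) /\ E (z * x) (z * y).
Proof. destruct HE as (_ & _ & _ & E_mul & _); apply E_mul. Qed.

Lemma TE_le x1 x2 x3 x4 : inM SU x1 -> inM SU x2 -> inM SU x3 -> inM SU x4 ->
  x1 <= x2 -> x3 <= x4 -> E x1 x4 -> E x2 x3 -> E x1 x2.
Proof. destruct HE as (_ & _ & _ & _ & E_le & _); apply E_le. Qed.

Lemma TE_ghost x : E (e * x) (szero SU) -> E x (szero SU).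
Proof. destruct HE as (_ & _ & _ & _ & _ & E_ghost); apply E_ghost. Qed.

Definition leE (a b : U) : Prop := a <= b \/ E a b.

Lemma leE_compat a b a' b' : inM SU a -> inM SU b -> inM SU a' -> inM SU b' ->
  E a a' -> E b b' -> a <= b -> leE a' b'.
Proof.
  intros Ha Hb Ha' Hb' Haa' Hbb' Hab.
  destruct (stm_le_total HU Ha' Hb') as [Hab' | Hba']; [now left|right].
  symmetry; apply (TE_le Hb' Ha' Ha Hb); auto; now symmetry.
Qed.

Lemma leE_trans a b c : inM SU a -> inM SU b -> inM SU c ->
  leE a b -> leE b c -> leE a c.
Proof.
  intros Ha Hb Hc [Hab | Eab] [Hbc | Ebc].
  - left; exact (stm_le_trans HU Ha Hb Hc Hab Hbc).
  - exact (leE_compat Ha Hb Ha Hc (reflexivity a) Ebc Hab).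
  - symmetry in Eab; exact (leE_compat Hb Hc Ha Hc Eab (reflexivity c) Hbc).
  - right; now transitivity b.
Qed.

Lemma leE_total a b : inM SU a -> inM SU b -> leE a b \/ leE b a.
Proof. intros Ha Hb; destruct (stm_le_total HU Ha Hb); [left|right]; now left. Qed.

Lemma leE_anti a b : inM SU a -> inM SU b -> leE a b -> leE b a -> E a b.
Proof.
  intros Ha Hb [Hab | Eab] [Hba | Eba].
  - apply (TE_le Ha Hb Hb Ha); auto; reflexivity.
  - now symmetry.
  - exact Eab.
  - exact Eab.
Qed.

Lemma leE_mul a b c : inM SU a -> inM SU b -> inM SU c ->
  leE a b -> leE (a * c) (b * c) /\ leE (c * a) (c * b).
Proof.
  intros Ha Hb Hc [Hab | Eab].
  - destruct (stm_le_mul HU Ha Hb Hc Hab); split; now left.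
  - destruct (TE_mul c Eab); split; now right.
Qed.

Definition qmul (c d : quot E) : quot E := [rep c * rep d].

Definition qle (c d : quot E) : Prop :=
  exists x y, inM SU x /\ inM SU y /\ c = [x] /\ d = [y] /\ x <= y.

Definition quot_stm : stm_ops (quot E) := STMOps qmul [sone SU] [szero SU] [e] qle.

Lemma qmul_proj x y : smul quot_stm [x] [y] = [x * y].
Proof.
  change ([rep [x] * rep [y]] = [x * y]); apply (qproj_eq TE_equivalence).
  assert (Ex : E (rep [x]) x) by (apply (qproj_eq TE_equivalence), qproj_rep).
  assert (Ey : E (rep [y]) y) by (apply (qproj_eq TE_equivalence), qproj_rep).
  transitivity (x * rep [y]); [apply (TE_mul _ Ex) | apply (TE_mul _ Ey)].
Qed.

Lemma qproj_transmission : transmission SU quot_stm (qproj E).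
Proof.
  split; [reflexivity|split; [reflexivity|split; [|split; [reflexivity|]]]].
  - intros x y; symmetry; apply qmul_proj.
  - intros x y Hx Hy Hxy; now exists x, y.
Qed.

Lemma inM_quot c : inM quot_stm c <-> exists a, inM SU a /\ c = [a].
Proof. exact (inM_transmission_image (@qproj_surj _ E) c qproj_transmission). Qed.

Lemma qle_proj a b : inM SU a -> inM SU b -> qle [a] [b] <-> leE a b.
Proof.
  intros Ha Hb; split.
  - intros (x & y & Hx & Hy & Eax & Eby & Hxy).
    apply (qproj_eq TE_equivalence) in Eax, Eby.
    symmetry in Eax, Eby; exact (leE_compat Hx Hy Ha Hb Eax Eby Hxy).
  - intros [Hab | Eab]; [now exists a, b|].
    exists b, b; repeat split; auto; [now apply (qproj_eq TE_equivalence)|].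
    now apply stm_le_refl.
Qed.

Ltac quot_reps :=
  repeat match goal with
  | H : inM quot_stm _ |- _ => apply inM_quot in H as (? & ? & ->)
  | c : quot E |- _ => destruct (qproj_surj c) as [? ->]
  end.

Lemma quot_is_stm : is_stm quot_stm.
Proof.
  repeat split; intros; quot_reps; cbn [sone szero se sle quot_stm] in *;
    rewrite ?qmul_proj in *;
    rewrite ?qle_proj in * by eauto using inM_mull, inM_mulr, inM_0.
  - now rewrite stm_mulA.
  - now rewrite stm_mul1x.
  - now rewrite stm_mulx1.
  - now rewrite stm_mul0x.
  - now rewrite stm_mulx0.
  - now rewrite stm_mulC_e.
  - now rewrite stm_mul_ee.
  - now apply (qproj_eq TE_equivalence), TE_ghost, (qproj_eq TE_equivalence).
  - left; now apply stm_le_refl.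
  - now apply (qproj_eq TE_equivalence), leE_anti.
  - eapply leE_trans; [..|eassumption|]; eassumption.
  - now apply leE_total.
  - now apply leE_mul.
  - now apply leE_mul.
  - left; now apply stm_le0x.
Qed.

End QuotientStm.

Theorem theorem1p7 (U : Type) (SU : stm_ops U) (HU : is_stm SU)
  (E : U -> U -> Prop) (HE : TE_relation SU E) :
  exists S : stm_ops (quot E),
    is_stm S /\ transmission SU S (@qproj U E) /\
    (forall S' : stm_ops (quot E),
       is_stm S' -> transmission SU S' (@qproj U E) -> same_stm S S').
Proof.
  exists (quot_stm SU E).
  split; [exact (quot_is_stm HU HE)|split; [exact (qproj_transmission HE)|]].
  intros S' HS' Hproj'.
  exact (surjective_transmission_same_stm (@qproj_surj U E) HU
           (quot_is_stm HU HE) HS' (qproj_transmission HE) Hproj').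
Qed.
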